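(* Let $\Delta=(\Gamma,\mathbf{R})$ be a theory with $A\Rightarrow B\in\mathbf{R}^{\Rightarrow}$ such that $A\wedge\neg B$ is PL-consistent. Then, with entailment evaluated over replete $\mathbf{R}$-ordered models, $\Delta\mid\sim A\Rightarrow B$.
   Context: Boolean formulas over propositional letters; $\models_{\mathrm{PL}}$ classical entailment; $A$ is PL-consistent if $A\not\models_{\mathrm{PL}}\bot$. A theory is $\Delta=(\Gamma,\mathbf{R})$, $\Gamma$ a finite set of Boolean or alethic ($\Box$-) formulas, $\mathbf{R}=(\mathbf{R}^{\Rightarrow},\mathbf{R}^{\mathrm{o}})$ with $\mathbf{R}^{\Rightarrow}$ a finite set of normality conditionals $A\Rightarrow B$ (''if $A$ then normally $B$''; body $b=A$, head $h=B$) and $\mathbf{R}^{\mathrm{o}}$ a finite set of obligations. For $X\subseteq\mathbf{R}^{\Rightarrow}$, $\mathrm{m}(X)=\{A\rightarrow B:A\Rightarrow B\in X\}$. Standing assumption (coherence): there is no nonempty $X\subseteq\mathbf{R}^{\Rightarrow}$ with $\mathrm{m}(X)\models_{\mathrm{PL}}\bigwedge_{r\in X}\neg b(r)$. LM-sequence: $\varepsilon(X)=\{A\Rightarrow B\in\mathbf{R}^{\Rightarrow}:\mathrm{m}(X)\models_{\mathrm{PL}}\neg A\}$, $\mathcal{E}_0=\mathbf{R}^{\Rightarrow}$, $\mathcal{E}_{i+1}=\varepsilon(\mathcal{E}_i)$; order $m$ = least $k$ with $\mathcal{E}_l=\mathcal{E}_k$ for all $l\ge k$, $\mathcal{E}_\infty=\mathcal{E}_m$.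 $\Delta_i=\mathcal{E}_i\setminus\mathcal{E}_{i+1}$ ($0\le i\le m-1$), $\Delta_m=\mathcal{E}_\infty$. $\tau(X)=\langle|\Delta_{m-1}\cap X|,\ldots,|\Delta_0\cap X|\rangle$; $X\gtrsim Y$ iff $\tau(X)=\tau(Y)$ or at the first differing coordinate $\tau(X)$ has the smaller entry. An $\mathbf{R}$-ordered model is $(W,\succeq_N,\succeq_I,v)$, $W\neq\emptyset$, valuation $v$, $w_1\succeq_N w_2$ iff $F(w_1)\gtrsim F(w_2)$ with $F(w)=\{r\in\mathbf{R}^{\Rightarrow}:w\models b(r)\wedge\neg h(r)\}$, and $\succeq_I$ the ideality ordering determined by $\mathbf{R}^{\mathrm{o}}$. $\max_{\succeq_N}(X)=\{w\in X:\forall u\in X(u\succeq_N w\Rightarrow w\succeq_N u)\}$. Truth: $w\models\Box A$ iff $A$ holds at all worlds; $w\models A\Rightarrow B$ iff $\max_{\succeq_N}(\Vert A\Vert)\subseteq\Vert B\Vert$. Replete: every PL-consistent Boolean formula holds at some world. $\Delta\mid\sim\varphi$ iff in every (replete) $\mathbf{R}$-ordered model, every world satisfying all of $\Gamma$ satisfies $\varphi$. *)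

From Stdlib Require List.
From HB Require Import structures.
From mathcomp Require Import all_boot.
From mathcomp Require Import boolp.
Set Implicit Arguments. Unset Strict Implicit. Unset Printing Implicit Defensive.

Inductive bform :=
  | BVar of nat | BBot | BTop
  | BNeg of bform | BAnd of bform & bform | BOr of bform & bform
  | BImp of bform & bform.

Fixpoint evalb (v : nat -> bool) (a : bform) : bool :=
  match a with
  | BVar p => v p | BBot => false | BTop => true
  | BNeg a => ~~ evalb v a
  | BAnd a b => evalb v a && evalb v b
  | BOr a b => evalb v a || evalb v b
  | BImp a b => evalb v a ==> evalb v b
  end.

Definition PLentails (X : seq bform) (a : bform) : Prop :=
  forall v : nat -> bool, all (evalb v) X -> evalb v a.

Definition PLconsistent (a : bform) : Prop := ~ PLentails [:: a] BBot.

Inductive form :=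
  | FB of bform
  | FNeg of form | FAnd of form & form | FOr of form & form | FImp of form & form
  | FBox of form
  | FCond of bform & bform.

Fixpoint cond_free (f : form) : bool :=
  match f with
  | FB _ => true
  | FNeg f => cond_free f
  | FAnd f g | FOr f g | FImp f g => cond_free f && cond_free g
  | FBox f => cond_free f
  | FCond _ _ => false
  end.

Section Rules.
Variable rules : seq (bform * bform).
Local Notation n := (size rules).
Definition body (i : 'I_n) : bform := (nth (BTop, BTop) rules i).1.
Definition head (i : 'I_n) : bform := (nth (BTop, BTop) rules i).2.

(* v satisfies m(X) = { A -> B : A => B in X } *)
Definition sat_m (v : nat -> bool) (X : {set 'I_n}) : Prop :=
  forall i, i \in X -> evalb v (BImp (body i) (head i)).

Definition m_entails (X : {set 'I_n}) (t : bform) : Prop :=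
  forall v, sat_m v X -> evalb v t.

Definition coherent : Prop :=
  forall X : {set 'I_n}, X != set0 ->
    ~ (forall v, sat_m v X -> forall i, i \in X -> ~~ evalb v (body i)).

Definition eps (X : {set 'I_n}) : {set 'I_n} :=
  [set i | `[< m_entails X (BNeg (body i)) >] ].

Definition LM (k : nat) : {set 'I_n} := iter k eps setT.

Lemma eps_mono (X Y : {set 'I_n}) : X \subset Y -> eps X \subset eps Y.
Proof.
move=> /subsetP XY; apply/subsetP => i; rewrite !inE => /asboolP H.
apply/asboolP => v Hv; apply: H => j jX; exact: Hv (XY _ jX).
Qed.

Lemma LM_decr k : LM k.+1 \subset LM k.
Proof.
elim: k => [|k IH]; first exact: subsetT.
exact: eps_mono.
Qed.

Lemma LM_stab : exists k, `[< forall l, k <= l -> LM l = LM k >].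
Proof.
have key k : (exists j, j <= k /\ LM j.+1 = LM j) \/ #|LM k| + k <= n.
  elim: k => [|k [[j [jk E]]|IH]].
  - by right; rewrite addn0 /LM /= cardsT card_ord.
  - by left; exists j; split => //; apply: leq_trans jk _.
  - have [E|NE] := eqVneq (LM k.+1) (LM k); first by left; exists k.
    right; have lt : #|LM k.+1| < #|LM k|.
      by apply: proper_card; rewrite properEneq NE LM_decr.
    by rewrite addnS; apply: leq_trans IH; rewrite ltn_add2r.
have [[j [_ Ej]]|] := key n.+1; last by rewrite addnS ltnNge leq_addl.
exists j; apply/asboolP => l /subnK <-; elim: (l - j) => [|d IH] //=.
by rewrite IH; exact: Ej.
Qed.

Definition LMorder : nat := ex_minn LM_stab.

Definition LMDelta (i : nat) : {set 'I_n} := LM i :\: LM i.+1.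

Definition tcoord (i : nat) (X : {set 'I_n}) : nat := #|LMDelta i :&: X|.

(* X >~ Y : tau(X) = tau(Y), or at the first differing coordinate of
   <|Delta_{m-1} cap X|, ..., |Delta_0 cap X|>  tau(X) is smaller *)
Definition setge (X Y : {set 'I_n}) : Prop :=
  (forall i, i < LMorder -> tcoord i X = tcoord i Y) \/
  (exists j, j < LMorder /\ tcoord j X < tcoord j Y /\
     forall i, j < i < LMorder -> tcoord i X = tcoord i Y).

Record model := Model {
  world : Type;
  world_inh : world;
  val : world -> nat -> bool
}.

Variable M : model.

Definition Fviol (w : world M) : {set 'I_n} :=
  [set i | evalb (val w) (body i) && ~~ evalb (val w) (head i)].

Definition geN (w1 w2 : world M) : Prop := setge (Fviol w1) (Fviol w2).

Definition maxN (a : bform) (w : world M) : Prop :=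
  evalb (val w) a /\
  forall u, evalb (val u) a -> geN u w -> geN w u.

Fixpoint sat (w : world M) (f : form) : Prop :=
  match f with
  | FB a => evalb (val w) a
  | FNeg f => ~ sat w f
  | FAnd f g => sat w f /\ sat w g
  | FOr f g => sat w f \/ sat w g
  | FImp f g => sat w f -> sat w g
  | FBox f => forall u, sat u f
  | FCond a b => forall u, maxN a u -> evalb (val u) b
  end.

Definition replete : Prop :=
  forall a : bform, PLconsistent a -> exists w : world M, evalb (val w) a.

End Rules.

Definition entails (Gamma : seq form) (rules : seq (bform * bform)) (phi : form) : Prop :=
  forall M : model, replete M ->
    forall w : world M, (forall g, List.In g Gamma -> sat rules w g) -> sat rules w phi.

From Pilot Require Import Defs.
From Stdlib Require List.
From mathcomp Require Import all_boot.
From mathcomp Require Import boolp.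
Set Implicit Arguments. Unset Strict Implicit. Unset Printing Implicit Defensive.

(* By coherence the LM-sequence ends in the empty set, so the rule r = (A => B)
   has a rank k: r lies in Delta_k = E_k \ E_(k+1).  As r is not in
   E_(k+1) = eps(E_k), the formula A /\ m(E_k) is consistent, and repleteness
   gives a world w' satisfying it.  Then F(w') misses E_k, so tau(F(w')) is
   zero in every coordinate j >= k, whereas any world u satisfying A /\ ~B has
   r in Delta_k /\ F(u).  Hence w' is strictly more normal than u, and u is not
   a most normal A-world. *)

Lemma In_nth_ord (T : Type) (d x : T) (s : seq T) :
  List.In x s -> exists i : 'I_(size s), nth d s i = x.
Proof.
elim: s => [|y s IH] //= [->|/IH [i <-]]; first by exists ord0.
by exists (lift ord0 i).
Qed.

Definition bigand (s : seq bform) : bform := foldr BAnd BTop s.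

Lemma eval_bigand v s : evalb v (bigand s) = all (evalb v) s.
Proof. by elim: s => //= a s ->. Qed.

Section LMSequence.
Variable rules : seq (bform * bform).
Local Notation n := (size rules).
Local Notation LM := (LM rules).
Local Notation m := (LMorder rules).

Lemma LM_antitone j k : k <= j -> LM j \subset LM k.
Proof.
move=> /subnK <-; elim: (j - k) => [|d IH]; first exact: subxx.
exact: subset_trans (LM_decr _ _) IH.
Qed.

Lemma LM_order_succ : LM m.+1 = LM m.
Proof. by rewrite /LMorder; case: ex_minnP => k /asboolP stab _; apply: stab. Qed.

Lemma coherent_LM_order : coherent rules -> LM m = set0.
Proof.
move=> coh; have [//|ne] := eqVneq (LM m) set0.
case: (coh _ ne) => v vm i.
by rewrite -{1}LM_order_succ inE => /asboolP; apply.
Qed.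

Lemma LMDelta_rank i : coherent rules -> exists2 k, k < m & i \in LMDelta rules k.
Proof.
move=> coh; have out_m : i \notin LM m by rewrite coherent_LM_order // inE.
have [[|k] out_k min_k] := ex_minnP (ex_intro (fun k => i \notin LM k) m out_m).
  by rewrite inE in out_k.
have in_k : i \in LM k by apply: contraT => /min_k; rewrite ltnn.
by exists k; [apply: min_k | apply/setDP].
Qed.

Definition mform (X : {set 'I_n}) : bform :=
  bigand [seq BImp (body i) (Defs.head i) | i <- enum X].

Lemma mformP v (X : {set 'I_n}) : reflect (sat_m v X) (evalb v (mform X)).
Proof.
rewrite eval_bigand all_map; apply: (iffP allP) => [H i iX | H i].
  by apply: H; rewrite mem_enum.
by rewrite mem_enum; apply: H.
Qed.

Lemma not_eps_consistent (X : {set 'I_n}) i :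
  i \notin eps X -> exists v, sat_m v X /\ evalb v (body i).
Proof.
rewrite inE => /asboolP NE; apply: contrapT => none; apply: NE => v vX /=.
by apply/negP => bv; apply: none; exists v.
Qed.

Lemma tcoord_eq0 (X : {set 'I_n}) k j : [disjoint X & LM k] -> k <= j -> tcoord j X = 0.
Proof.
move=> dXk kj; apply/eqP; rewrite cards_eq0 -subset0; apply/subsetP => i.
rewrite !inE => /andP [/andP [_ ij] iX].
by have := disjointFr dXk iX; rewrite (subsetP (LM_antitone kj)).
Qed.

Lemma setge_of_lt_at (X Y : {set 'I_n}) k : k < m ->
  (forall j, k <= j < m -> tcoord j X <= tcoord j Y) ->
  tcoord k X < tcoord k Y -> setge X Y.
Proof.
move=> km le_XY lt_k; right.
pose P j := [&& j < m, k <= j & tcoord j X != tcoord j Y].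
have P_k : exists j, P j by exists k; rewrite /P km leqnn ltn_eqF.
have P_bnd j : P j -> j <= m by case/and3P => /ltnW.
have [j /and3P [jm kj ne_j] max_j] := ex_maxnP P_k P_bnd.
exists j; split=> //; split; first by rewrite ltn_neqAle ne_j le_XY ?kj.
move=> i /andP [ji im]; apply/eqP; apply: contraTT (ji) => ne_i.
by rewrite -leqNgt max_j // /P im ne_i (leq_trans kj (ltnW ji)).
Qed.

Lemma not_setge_of_lt_at (X Y : {set 'I_n}) k : k < m ->
  (forall j, k <= j < m -> tcoord j X <= tcoord j Y) ->
  tcoord k X < tcoord k Y -> ~ setge Y X.
Proof.
move=> km le_XY lt_k [eq_YX | [j [jm [lt_j eq_above]]]].
  by move: lt_k; rewrite eq_YX ?ltnn.
have [kj | jk] := leqP k j.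
  by move: lt_j; rewrite ltnNge le_XY ?kj.
by move: lt_k; rewrite eq_above ?jk ?km ?ltnn.
Qed.

Section Models.
Variable M : model.

Lemma replete_sat_m v (X : {set 'I_n}) a : replete M -> sat_m v X -> evalb v a ->
  exists w : world M, sat_m (Defs.val w) X /\ evalb (Defs.val w) a.
Proof.
move=> rep vX va; have cons : PLconsistent (BAnd a (mform X)).
  by move=> /(_ v); rewrite /= va andbT => /(_ (introT (mformP v X) vX)).
by have [w /andP [wa /mformP wX]] := rep _ cons; exists w.
Qed.

Lemma sat_m_Fviol (w : world M) (X : {set 'I_n}) :
  sat_m (Defs.val w) X -> [disjoint Fviol rules w & X].
Proof.
move=> wX; apply/pred0P => i /=; rewrite inE.
by apply/negP => /andP [/andP [b nh] /wX /=]; rewrite b (negbTE nh).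
Qed.

Lemma geN_strict (w u : world M) k : k < m ->
  [disjoint Fviol rules w & LM k] -> 0 < tcoord k (Fviol rules u) ->
  geN rules w u /\ ~ geN rules u w.
Proof.
move=> km dwk u_k.
have le_wu j : k <= j < m -> tcoord j (Fviol rules w) <= tcoord j (Fviol rules u).
  by case/andP => kj _; rewrite (tcoord_eq0 dwk kj).
have lt_wu : tcoord k (Fviol rules w) < tcoord k (Fviol rules u).
  by rewrite (tcoord_eq0 dwk (leqnn k)).
split; [exact: setge_of_lt_at le_wu lt_wu | exact: not_setge_of_lt_at le_wu lt_wu].
Qed.

End Models.
End LMSequence.

Theorem proposition5 (Gamma : seq form) (rules : seq (bform * bform)) (A B : bform) :
  (forall g, List.In g Gamma -> cond_free g) ->
  coherent rules ->
  List.In (A, B) rules ->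
  PLconsistent (BAnd A (BNeg B)) ->
  entails Gamma rules (FCond A B).
Proof.
move=> _ coh inAB _ M rep w _ u [uA umax]; apply: contraT => uNB.
have [r rAB] := In_nth_ord (BTop, BTop) inAB.
have [br hr] : body r = A /\ Defs.head r = B by rewrite /body /Defs.head rAB.
have [k km r_k] := LMDelta_rank r coh.
have [v [v_k vA]] := not_eps_consistent (setDP r_k).2.
have [w' [w'_k w'A]] := replete_sat_m rep v_k vA.
have u_k : 0 < tcoord k (Fviol rules u).
  by rewrite card_gt0; apply/set0Pn; exists r; rewrite inE r_k inE br hr uA uNB.
have [w'u /(_ (umax w' _ w'u))] := geN_strict km (sat_m_Fviol w'_k) u_k.
by rewrite -br => /(_ w'A).
Qed.
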